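(* Let $X$ be a $T_1$ space and $T\subset X$ such that (a) for every $x\in X-T$ there is a clopen subset $W$ of $X$ with $x\in W$ and $W\cap T=\emptyset$, and (b) $X-T$ is totally disconnected. Let $\mathcal{C}\subset\mathcal{K}(X)$ be connected. Then for all $Y_1,Y_2\in\mathcal{C}$, $Y_1-T=Y_2-T$.
   Context: $\mathcal{K}(X)$ is the set of nonempty compact subsets of $X$ with the Vietoris topology (generated by $U^+=\{A: A\subset U\}$ and $U^-=\{A: A\cap U\neq\emptyset\}$ for $U$ open in $X$). A space is totally disconnected if any two distinct points can be separated by a clopen set containing one but not the other. *)

From HB Require Import structures.
From mathcomp Require Import all_boot all_order all_algebra.
From mathcomp Require Import all_classical all_reals all_analysis.
Set Implicit Arguments. Unset Strict Implicit. Unset Printing Implicit Defensive.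
Local Open Scope classical_set_scope.

(* The Vietoris topology on the power set of X: carrier (set X), generated by
   the subbase  U^+ = [set A | A `<=` U]  and  U^- = [set A | A `&` U !=set0]
   for U open in X.  The hyperspace K(X) of nonempty compact subsets is then
   the subset [set A | A !=set0 /\ compact A] of this space, with the subspace
   topology (which is exactly the Vietoris topology of K(X), since the
   subbase restricts to the subbase). *)
Definition vietoris (X : topologicalType) : Type := set X.

Section Vietoris.
Context (X : topologicalType).
HB.instance Definition _ := Choice.on (vietoris X).
HB.instance Definition _ := Pointed.on (vietoris X).

Definition vietoris_subbase_index : set (set X * bool) :=
  [set p | open p.1].
Definition vietoris_subbase (p : set X * bool) : set (vietoris X) :=
  if p.2 then [set A : vietoris X | A `<=` p.1]
  else [set A : vietoris X | A `&` p.1 !=set0].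

HB.instance Definition _ := @isSubBaseTopological.Build (vietoris X)
  (set X * bool)%type vietoris_subbase_index vietoris_subbase.
End Vietoris.

Definition hyperspace (X : topologicalType) : set (vietoris X) :=
  [set A : vietoris X | (A : set X) !=set0 /\ compact (A : set X)].
Arguments hyperspace : clear implicits.

Definition rel_clopen (X : topologicalType) (S B : set X) :=
  (exists2 U, open U & B = S `&` U) /\ (exists2 F, closed F & B = S `&` F).

Definition totally_disconnected_sep (X : topologicalType) (S : set X) :=
  forall x y, S x -> S y -> x <> y ->
    exists B, [/\ rel_clopen S B, B x & ~ B y].

From HB Require Import structures.
From mathcomp Require Import all_boot all_order all_algebra.
From mathcomp Require Import all_classical all_reals all_analysis.
From mathcomp Require Import finmap.
Set Implicit Arguments. Unset Strict Implicit. Unset Printing Implicit Defensive.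
Local Open Scope classical_set_scope.

(* The hypotheses (a) and (b) give, for every x outside T and every
   y <> x, a clopen set of X containing x but not y.  If x lies in Y1 `\` T but
   not in Y2, compactness of Y2 turns these into one clopen W containing x and
   missing Y2.  The sets of the hyperspace meeting W form a clopen set of the
   Vietoris topology; it contains Y1 but not Y2, contradicting connectedness
   of C. *)

Lemma compact_clopen_separation (X : topologicalType) (K : set X) (x : X) :
  compact K -> (forall y, K y -> exists D, [/\ clopen D, D x & ~ D y]) ->
  exists W, [/\ clopen W, W x & W `&` K = set0].
Proof.
move=> cK sepK.
pose G := filter_from [set D : set X | clopen D /\ D x] id.
have GF : Filter G.
  apply: filter_from_filter; first by exists setT; split => //; exact: clopenT.
  by move=> A B [cA Ax] [cB Bx]; exists (A `&` B) => //; split; [exact: clopenI|].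
(* Near y in K, take y' outside D_y and i in D_y; then i <> y'. *)
have [|W [cW Wx] WK] := (compact_near_coveringP K).1 cK X G (fun i y => i <> y) GF.
  move=> y /sepK [D [[oD cD] Dx Dy]]; exists (~` D, D).
    by split; [apply: open_nbhs_nbhs; split => //; exact: closed_openC|exists D].
  by case=> y' i [/= Dy' Di] iy'; apply: Dy'; rewrite -iy'.
exists W; split => //.
by apply/disjoints_subset => z Wz Kz; exact: (WK z Wz z Kz erefl).
Qed.

Lemma connected_sub_clopen (X : topologicalType) (C W : set X) :
  connected C -> clopen W -> C `&` W !=set0 -> C `<=` W.
Proof.
by move=> cC [oW cW] CW; apply/setIidPl/cC => //; [exists W|exists W].
Qed.

Lemma vietoris_subbase_open (X : topologicalType) (p : set X * bool) :
  open p.1 -> open (vietoris_subbase p : set (vietoris X)).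
Proof.
move=> op.
exists [set vietoris_subbase p]; last by rewrite bigcup_set1.
move=> _ ->; exists [fset p]%fset.
  by move=> q /=; rewrite inE => /eqP ->; rewrite in_setE.
by rewrite set_fset1 bigcap_set1.
Qed.

Lemma vietoris_hit_clopen (X : topologicalType) (W : set X) :
  clopen W -> clopen [set A : vietoris X | A `&` W !=set0].
Proof.
move=> [oW cW]; split; first exact: (@vietoris_subbase_open X (W, false)).
have -> : [set A : vietoris X | A `&` W !=set0] =
          ~` vietoris_subbase (~` W, true).
  apply/seteqP; split => A /=; first by case=> z [Az Wz] /(_ z Az).
  by move=> /existsNP [z /not_implyP [Az /contrapT Wz]]; exists z.
by rewrite closedC; apply: vietoris_subbase_open; exact: closed_openC.
Qed.

Section OutsideT.
Context (X : topologicalType) (T : set X).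
Hypothesis ha : forall x, (~` T) x ->
  exists W : set X, [/\ clopen W, W x & W `&` T = set0].
Hypothesis hb : totally_disconnected_sep (~` T).

Lemma clopen_separation_outside x y :
  ~ T x -> x <> y -> exists D : set X, [/\ clopen D, D x & ~ D y].
Proof.
move=> Tx xy; have [W [[oW cW] Wx WT]] := ha Tx.
have WnT : W `<=` ~` T by apply/disjoints_subset.
have [Ty|Ty] := pselect (T y); first by exists W; split => // /WnT.
have [B [[[U oU BU] [F cF BF]] Bx By]] := hb Tx Ty xy.
have WB V : B = ~` T `&` V -> W `&` B = W `&` V.
  by move=> ->; rewrite setIA (setIidl WnT).
exists (W `&` B); split => //; last by case.
by split; [rewrite (WB U BU); exact: openI|rewrite (WB F BF); exact: closedI].
Qed.

Lemma connected_hyperspace_setD_sub (C : set (vietoris X)) :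
  C `<=` hyperspace X -> connected C ->
  forall Y1 Y2 : vietoris X, C Y1 -> C Y2 -> (Y1 : set X) `\` T `<=` Y2.
Proof.
move=> CK cC Y1 Y2 CY1 CY2 x [Y1x Tx]; apply: contrapT => Y2x.
have [_ cY2] := CK _ CY2.
have [W [cW Wx WY2]] : exists W, [/\ clopen W, W x & W `&` Y2 = set0].
  apply: compact_clopen_separation cY2 _ => y Y2y.
  by apply: clopen_separation_outside => // xy; apply: Y2x; rewrite xy.
have /connected_sub_clopen : C `&` [set A : vietoris X | A `&` W !=set0] !=set0.
  by exists Y1; split => //; exists x.
move=> /(_ cC (vietoris_hit_clopen cW) Y2 CY2) [z [Y2z Wz]].
by have : (W `&` Y2) z by []; rewrite WY2.
Qed.

End OutsideT.

Theorem lemma5p3 (X : topologicalType) (T : set X)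
  (hT1 : accessible_space X)
  (ha : forall x, (~` T) x -> exists W : set X, [/\ clopen W, W x & W `&` T = set0])
  (hb : totally_disconnected_sep (~` T))
  (C : set (vietoris X)) (hCK : C `<=` hyperspace X) (hC : connected C) :
  forall Y1 Y2 : vietoris X, C Y1 -> C Y2 -> (Y1 : set X) `\` T = (Y2 : set X) `\` T.
Proof.
have sub := connected_hyperspace_setD_sub ha hb hCK hC.
move=> Y1 Y2 CY1 CY2; apply/seteqP; split => z [Yz Tz]; split => //.
- exact: (sub Y1 Y2).
- exact: (sub Y2 Y1).
Qed.
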